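(* Let $A\| B$ be a right D2 extension and $\mathcal E=\mathrm{End}({}_BA)$. Then $\Psi:A\otimes_BA\to\mathrm{Hom}(\mathcal E_A,A_A)$, $\Psi(a\otimes a')(f)=af(a')$, is an isomorphism of left $B$-modules, with inverse $F\mapsto\sum_jF(\gamma_j)u_j^1\otimes u_j^2$ for any right D2 quasibase $\gamma_j,u_j$. Here $\mathcal E$ is a right $A$-module via $(f\cdot a)(x)=f(x)a$, and $\mathrm{Hom}(\mathcal E_A,A_A)$ is a left $B$-module via $(bF)(f)=bF(f)$.
   Context: Algebras over a commutative ring $K$; $A\| B$ a unit-preserving algebra homomorphism $B\to A$; $S=\mathrm{End}({}_BA_B)$; $T=(A\otimes_BA)^B$ with Sweedler notation $t=t^1\otimes t^2$. $A\| B$ is right D2 if $A\otimes_BA$ is isomorphic as an $A$-$B$-bimodule to a direct summand of some $A^n$; equivalently there are finitely many $\gamma_j\in S,u_j\in T$ with $a\otimes_Ba'=\sum_ja\gamma_j(a')u_j^1\otimes u_j^2$ for all $a,a'$ (right D2 quasibase). *)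

From HB Require Import structures.
From mathcomp Require Import all_boot all_order all_algebra.
Set Implicit Arguments. Unset Strict Implicit. Unset Printing Implicit Defensive.
Import GRing.Theory.
Local Open Scope ring_scope.

Definition additive_map (U V : zmodType) (h : U -> V) :=
  forall x y, h (x + y) = h x + h y.

Section D2.
Variables (K : comNzRingType) (A B : algType K) (iota : {lrmorphism B -> A}).

Definition balanced_map (N : zmodType) (phi : A -> A -> N) :=
  [/\ forall a1 a2 a', phi (a1 + a2) a' = phi a1 a' + phi a2 a',
      forall a a1' a2', phi a (a1' + a2') = phi a a1' + phi a a2'
    & forall a b a', phi (a * iota b) a' = phi a (iota b * a')].

(* (M, tens) is the tensor product A (x)_B A, given by its universal property. *)
Definition is_tensor_BA (M : zmodType) (tens : A -> A -> M) :=
  [/\ balanced_map tens,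
      forall (N : zmodType) (phi : A -> A -> N), balanced_map phi ->
        exists h : M -> N, additive_map h /\ forall a a', h (tens a a') = phi a a'
    & forall (N : zmodType) (h1 h2 : M -> N), additive_map h1 -> additive_map h2 ->
        (forall a a', h1 (tens a a') = h2 (tens a a')) -> forall t, h1 t = h2 t].

Definition left_A_action (M : zmodType) (tens : A -> A -> M) (lact : A -> M -> M) :=
  (forall x, additive_map (lact x)) /\
  forall x a a', lact x (tens a a') = tens (x * a) a'.

Definition right_B_action (M : zmodType) (tens : A -> A -> M) (ract : M -> B -> M) :=
  (forall b, additive_map (fun t => ract t b)) /\
  forall b a a', ract (tens a a') b = tens a (a' * iota b).

Definition End_B (f : A -> A) :=
  additive_map f /\ forall b x, f (iota b * x) = iota b * f x.

Definition End_BB (g : A -> A) :=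
  [/\ additive_map g, forall b x, g (iota b * x) = iota b * g x
    & forall b x, g (x * iota b) = g x * iota b].

Definition in_T (M : zmodType) (lact : A -> M -> M) (ract : M -> B -> M) (t : M) :=
  forall b, lact (iota b) t = ract t b.

Definition Hom_EA (F : (A -> A) -> A) :=
  (forall f g, End_B f -> End_B g -> F (fun x => f x + g x) = F f + F g) /\
  (forall f a, End_B f -> F (fun x => f x * a) = F f * a).

(* right D2: A (x)_B A is isomorphic as A-B-bimodule to a direct summand of A^n *)
Definition right_D2 (M : zmodType) (lact : A -> M -> M) (ract : M -> B -> M) :=
  exists n (i : M -> 'I_n -> A) (p : ('I_n -> A) -> M),
    [/\ forall t t' k, i (t + t') k = i t k + i t' k,
        forall x t k, i (lact x t) k = x * i t k
      & forall b t k, i (ract t b) k = i t k * iota b] /\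
    [/\ forall v w, p (fun k => v k + w k) = p v + p w,
        forall x v, p (fun k => x * v k) = lact x (p v),
        forall b v, p (fun k => v k * iota b) = ract (p v) b
      & forall t, p (i t) = t].

Definition right_D2_quasibase (M : zmodType) (tens : A -> A -> M)
  (lact : A -> M -> M) (ract : M -> B -> M) (n : nat)
  (gamma : 'I_n -> A -> A) (u : 'I_n -> M) :=
  [/\ forall j, End_BB (gamma j),
      forall j, in_T lact ract (u j)
    & forall a a', tens a a' = \sum_(j < n) lact (a * gamma j a') (u j)].

End D2.

(* Psi is left A-linear in t, and a right D2 quasibase gives two dual
   expansions: a (x) a' = sum_j a gamma_j(a') u_j in A (x)_B A, and
   f x = sum_j gamma_j(x) Psi(u_j)(f) for f in End(_B A), obtained by applying
   Psi(-)(f) to 1 (x) x.  The first makes F |-> sum_j F(gamma_j) u_j a left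
   inverse of Psi; the second, with the right A-linearity of F, a right inverse.
   Only gamma_j in End(_B A) is used, and such a quasibase is read off the split
   embedding i : A (x)_B A -> A^n of the D2 condition:
   gamma_k(a') = i(1 (x) a')_k and u_k = p(e_k). *)

From Stdlib Require Import FunctionalExtensionality.
From HB Require Import structures.
From mathcomp Require Import all_boot all_order all_algebra.
Set Implicit Arguments. Unset Strict Implicit. Unset Printing Implicit Defensive.
Import GRing.Theory.
Local Open Scope ring_scope.

Lemma additive_map0 (U V : zmodType) (h : U -> V) : additive_map h -> h 0 = 0.
Proof. by move=> hD; have := hD 0 0; rewrite addr0 -{1}[h 0]addr0 => /addrI <-. Qed.

Lemma additive_map_sum (U V : zmodType) (h : U -> V) (I : Type) (s : seq I)
    (W : I -> U) :
  additive_map h -> h (\sum_(j <- s) W j) = \sum_(j <- s) h (W j).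
Proof.
move=> hD; elim: s => [|i s IHs]; first by rewrite !big_nil additive_map0.
by rewrite !big_cons hD IHs.
Qed.

Lemma pointwise_additive_sum (X : Type) (V Y : zmodType) (h : (X -> V) -> Y)
    (I : Type) (s : seq I) (W : I -> X -> V) :
  (forall v w, h (fun x => v x + w x) = h v + h w) ->
  h (fun x => \sum_(j <- s) W j x) = \sum_(j <- s) h (W j).
Proof.
move=> hD; have h0 : h (fun _ => 0) = 0.
  have := hD (fun _ => 0) (fun _ => 0).
  rewrite (functional_extensionality (fun _ => 0 + 0) (fun _ => 0)) => [|x].
    by rewrite -{1}[h _]addr0 => /addrI <-.
  by rewrite addr0.
elim: s => [|i s IHs].
  rewrite big_nil -h0; congr h.
  by apply: functional_extensionality => x; rewrite big_nil.
by rewrite big_cons -IHs -hD; congr h; apply: functional_extensionality => x;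
  rewrite big_cons.
Qed.

Section Endomorphisms.
Variables (K : comNzRingType) (A B : algType K) (iota : {lrmorphism B -> A}).

Lemma End_B_id : End_B iota id.
Proof. by []. Qed.

Lemma End_B_add f g :
  End_B iota f -> End_B iota g -> End_B iota (fun x => f x + g x).
Proof.
move=> [fD fB] [gD gB]; split=> [x y|b x]; first by rewrite fD gD addrACA.
by rewrite fB gB mulrDr.
Qed.

Lemma End_B_mulr f c : End_B iota f -> End_B iota (fun x => f x * c).
Proof.
by move=> [fD fB]; split=> [x y|b x]; [rewrite fD mulrDl | rewrite fB mulrA].
Qed.

Lemma End_B_sum (I : Type) (s : seq I) (G : I -> A -> A) :
  (forall j, End_B iota (G j)) -> End_B iota (fun x => \sum_(j <- s) G j x).
Proof.
move=> GE; split=> [x y|b x].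
  by rewrite -big_split; apply: eq_bigr => j _; rewrite (GE j).1.
by rewrite mulr_sumr; apply: eq_bigr => j _; rewrite (GE j).2.
Qed.

Lemma End_BB_End_B g : End_BB iota g -> End_B iota g.
Proof. by case. Qed.

Lemma Hom_EA_sum F (I : Type) (s : seq I) (G : I -> A -> A) :
  Hom_EA iota F -> (forall j, End_B iota (G j)) ->
  F (fun x => \sum_(j <- s) G j x) = \sum_(j <- s) F (G j).
Proof.
move=> [FD FZ] GE; elim: s => [|i s IHs].
  have -> : (fun x => \sum_(j <- [::]) G j x) = (fun x => x * 0).
    by apply: functional_extensionality => x; rewrite big_nil mulr0.
  by rewrite big_nil (FZ id) ?mulr0 //; apply: End_B_id.
rewrite big_cons -IHs -FD //; last exact: End_B_sum.
by congr F; apply: functional_extensionality => x; rewrite big_cons.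
Qed.

End Endomorphisms.

Section TensorDuality.
Variables (K : comNzRingType) (A B : algType K) (iota : {lrmorphism B -> A}).
Variables (M : zmodType) (tens : A -> A -> M) (lact : A -> M -> M).
Variable Psi : M -> (A -> A) -> A.

Hypothesis tensP : is_tensor_BA iota tens.
Hypothesis lactP : left_A_action tens lact.
Hypothesis PsiP : forall f, End_B iota f ->
  additive_map (fun t => Psi t f) /\ forall a a', Psi (tens a a') f = a * f a'.

(* the part of a right D2 quasibase that the inverse of Psi actually uses *)
Definition End_quasibase n (gamma : 'I_n -> A -> A) (u : 'I_n -> M) :=
  (forall j, End_B iota (gamma j)) /\
  forall a a', tens a a' = \sum_(j < n) lact (a * gamma j a') (u j).

Lemma tensor_ext (N : zmodType) (h1 h2 : M -> N) :
  additive_map h1 -> additive_map h2 ->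
  (forall a a', h1 (tens a a') = h2 (tens a a')) -> forall t, h1 t = h2 t.
Proof. by case: tensP => _ _; apply. Qed.

Lemma lactDl x y t : lact (x + y) t = lact x t + lact y t.
Proof.
case: lactP tensP => lactD lact_tens [[tensDl _ _] _ _].
apply: (tensor_ext (h2 := fun t => lact x t + lact y t)) => // [t1 t2|a a'].
  by rewrite !lactD addrACA.
by rewrite !lact_tens mulrDl tensDl.
Qed.

Lemma Psi_lact x t f : End_B iota f -> Psi (lact x t) f = x * Psi t f.
Proof.
move=> fE; have [PsiD Psi_tens] := PsiP fE; case: lactP => lactD lact_tens.
apply: (tensor_ext (h1 := fun t => Psi (lact x t) f)
  (h2 := fun t => x * Psi t f)).
- by move=> t1 t2; rewrite lactD PsiD.
- by move=> t1 t2; rewrite PsiD mulrDr.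
- by move=> a a'; rewrite lact_tens !Psi_tens mulrA.
Qed.

Lemma Psi_Hom_EA t : Hom_EA iota (Psi t).
Proof.
split=> [f g fE gE|f c fE].
  have [PsiD Psi_tens] := PsiP (End_B_add fE gE).
  have [[PsifD Psif_tens] [PsigD Psig_tens]] := (PsiP fE, PsiP gE).
  apply: (tensor_ext (h1 := fun t => Psi t (fun x => f x + g x))
    (h2 := fun t => Psi t f + Psi t g)) => // [t1 t2|a a'].
    by rewrite PsifD PsigD addrACA.
  by rewrite Psi_tens Psif_tens Psig_tens mulrDr.
have [PsiD Psi_tens] := PsiP (End_B_mulr c fE); have [PsifD Psif_tens] := PsiP fE.
apply: (tensor_ext (h1 := fun t => Psi t (fun x => f x * c))
  (h2 := fun t => Psi t f * c)) => // [t1 t2|a a'].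
  by rewrite PsifD mulrDl.
by rewrite Psi_tens Psif_tens mulrA.
Qed.

Section Quasibase.
Variables (n : nat) (gamma : 'I_n -> A -> A) (u : 'I_n -> M).
Hypothesis qbP : End_quasibase gamma u.

Lemma quasibase_tensor_expansion t :
  \sum_(j < n) lact (Psi t (gamma j)) (u j) = t.
Proof.
have [gammaE tens_qb] := qbP.
apply: (tensor_ext (h1 := fun t => \sum_(j < n) lact (Psi t (gamma j)) (u j))
  (h2 := id)) => // [t1 t2|a a'].
  by rewrite -big_split; apply: eq_bigr => j _; rewrite (PsiP (gammaE j)).1 lactDl.
by rewrite [RHS]tens_qb; apply: eq_bigr => j _; rewrite (PsiP (gammaE j)).2.
Qed.

Lemma quasibase_End_B_expansion f x : End_B iota f ->
  f x = \sum_(j < n) gamma j x * Psi (u j) f.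
Proof.
move=> fE; have [PsiD Psi_tens] := PsiP fE.
rewrite -[f x]mul1r -Psi_tens qbP.2 (additive_map_sum _ _ PsiD).
by apply: eq_bigr => j _; rewrite Psi_lact // mul1r.
Qed.

Lemma Psi_quasibase_inverse F f : Hom_EA iota F -> End_B iota f ->
  Psi (\sum_(j < n) lact (F (gamma j)) (u j)) f = F f.
Proof.
move=> FH fE; have [PsiD _] := PsiP fE.
rewrite (additive_map_sum _ _ PsiD).
rewrite [in RHS](functional_extensionality f _
  (fun x => quasibase_End_B_expansion x fE)).
rewrite (Hom_EA_sum _ FH) => [|j]; last exact: End_B_mulr (qbP.1 j).
by apply: eq_bigr => j _; rewrite Psi_lact // FH.2 //; exact: qbP.1.
Qed.

End Quasibase.

Lemma right_D2_End_quasibase (ract : M -> B -> M) :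
  right_D2 iota lact ract -> exists n (gamma : 'I_n -> A -> A) (u : 'I_n -> M),
    End_quasibase gamma u.
Proof.
case=> n [i [p [[iD i_lact _] [pD p_lact _ p_i]]]].
case: tensP lactP => [[_ tensDr tens_bal] _ _] [_ lact_tens].
exists n, (fun k a' => i (tens 1 a') k), (fun k => p (fun k' => (k' == k)%:R)).
split=> [k|a a'].
  split=> [x y|b x]; first by rewrite tensDr iD.
  by rewrite -tens_bal mul1r -{1}[iota b]mulr1 -lact_tens i_lact.
under eq_bigr do rewrite -p_lact.
rewrite -pointwise_additive_sum // -[LHS]p_i; congr p.
apply: functional_extensionality => k'.
rewrite (bigD1 k') //= eqxx mulr1 big1 ?addr0 => [|k /negPf]; last first.
  by rewrite eq_sym => ->; rewrite mulr0.
by rewrite -i_lact lact_tens mulr1.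
Qed.

End TensorDuality.

Theorem lemma4p3 (K : comNzRingType) (A B : algType K) (iota : {lrmorphism B -> A})
  (M : zmodType) (tens : A -> A -> M) (lact : A -> M -> M) (ract : M -> B -> M)
  (Psi : M -> (A -> A) -> A) :
  is_tensor_BA iota tens ->
  left_A_action tens lact ->
  right_B_action iota tens ract ->
  right_D2 iota lact ract ->
  (forall f, End_B iota f ->
     additive_map (fun t => Psi t f) /\
     forall a a', Psi (tens a a') f = a * f a') ->
  [/\ forall t, Hom_EA iota (Psi t),
      forall b t f, End_B iota f -> Psi (lact (iota b) t) f = iota b * Psi t f,
      forall t t', (forall f, End_B iota f -> Psi t f = Psi t' f) -> t = t',
      forall F, Hom_EA iota F -> exists t, forall f, End_B iota f -> Psi t f = F f
    & forall n (gamma : 'I_n -> A -> A) (u : 'I_n -> M),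
        right_D2_quasibase iota tens lact ract gamma u ->
        (forall t, \sum_(j < n) lact (Psi t (gamma j)) (u j) = t) /\
        (forall F, Hom_EA iota F -> forall f, End_B iota f ->
           Psi (\sum_(j < n) lact (F (gamma j)) (u j)) f = F f)].
Proof.
move=> tensP lactP _ D2 PsiP.
have [n [gamma [u qb]]] := right_D2_End_quasibase tensP lactP D2.
split.
- exact: Psi_Hom_EA tensP PsiP.
- by move=> b t f fE; rewrite (Psi_lact tensP lactP PsiP).
- move=> t t' eqPsi.
  rewrite -(quasibase_tensor_expansion tensP lactP PsiP qb t).
  rewrite -(quasibase_tensor_expansion tensP lactP PsiP qb t').
  by apply: eq_bigr => j _; rewrite eqPsi //; exact: qb.1.
- move=> F FH; exists (\sum_(j < n) lact (F (gamma j)) (u j)) => f fE.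
  by rewrite (Psi_quasibase_inverse tensP lactP PsiP qb FH fE).
- move=> m g v [gS _ tens_qb].
  have qb' : End_quasibase iota tens lact g v.
    by split=> // j; apply: End_BB_End_B.
  split=> [t|F FH f fE].
    by rewrite (quasibase_tensor_expansion tensP lactP PsiP qb' t).
  by rewrite (Psi_quasibase_inverse tensP lactP PsiP qb' FH fE).
Qed.
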